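(* Let $S$ be a group and $A$ a left $S$-act without zero subacts. Then: (i) $A\amalg z_1$ and $A\amalg(z_1\amalg z_2)$ are not geometrically equivalent; (ii) $A\amalg(z_1\amalg z_2)$ and $A\amalg\coprod_{i\in I}z_i$ are geometrically equivalent for every set $I$ with $|I|>1$.
   Context: A left $S$-act is a nonempty set with an action $S\times A\to A$ satisfying $1a=a$, $(st)a=s(ta)$; homomorphisms preserve the action; $\amalg$ denotes coproduct (disjoint union). A zero $S$-act is a one-element $S$-act; $z,z_1,z_2,z_i$ denote zero $S$-acts. A zero subact of $A$ is a one-element subact (an element fixed by all of $S$). For a nonempty finite set $X$, $F_X=\coprod_{x\in X}S_x$ is the free $S$-act on $X$. For an $S$-act $G$ and a relation $T\subseteq F_X\times F_X$, $T'_G=\{\mu:F_X\to G \text{ homomorphism}: T\subseteq\ker\mu\}$ and $T''_G=\bigcap_{\mu\in T'_G}\ker\mu$ (empty intersection $=F_X\times F_X$). $S$-acts $G_1,G_2$ are geometrically equivalent iff $T''_{G_1}=T''_{G_2}$ for all nonempty finite $X$ and all $T\subseteq F_X\times F_X$. *)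

From mathcomp Require Import all_boot.
Unset Printing Implicit Defensive.


Record group := Group {
  gcar :> Type;
  gmul : gcar -> gcar -> gcar;
  gone : gcar;
  ginv : gcar -> gcar;
  gmulA : forall x y z, gmul x (gmul y z) = gmul (gmul x y) z;
  gmul1 : forall x, gmul gone x = x;
  gmulr1 : forall x, gmul x gone = x;
  gmulV : forall x, gmul (ginv x) x = gone;
  gmulrV : forall x, gmul x (ginv x) = gone }.
Arguments gmul {g} _ _.
Arguments gone g : assert.
Arguments ginv {g} _.

(* A left S-act (carrier + action satisfying 1a = a and (st)a = s(ta)).
   Nonemptiness is imposed separately where needed (all constructed acts
   below are nonempty whenever their summands are). *)
Record act (S : group) := Act {
  acar :> Type;
  actf : S -> acar -> acar;
  act1 : forall a, actf (gone S) a = a;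
  actM : forall s t a, actf (gmul s t) a = actf s (actf t a) }.

Arguments actf {S} a0 _ _.
Arguments act1 {S} a0 _.
Arguments actM {S} a0 _ _ _.

Definition is_zero_act (S : group) (z : act S) : Prop :=
  exists c : z, forall x : z, x = c.

Definition no_zero_subacts (S : group) (A : act S) : Prop :=
  ~ exists a : A, forall s : S, actf A s a = a.

Definition coprod_actf (S : group) (A B : act S) (s : S) (x : A + B) : A + B :=
  match x with inl a => inl (actf A s a) | inr b => inr (actf B s b) end.

Lemma coprod_act1 (S : group) (A B : act S) x : coprod_actf S A B (gone S) x = x.
Proof. by case: x => y /=; rewrite act1. Qed.

Lemma coprod_actM (S : group) (A B : act S) s t x :
  coprod_actf S A B (gmul s t) x = coprod_actf S A B s (coprod_actf S A B t x).
Proof. by case: x => y /=; rewrite actM. Qed.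

Definition coprod (S : group) (A B : act S) : act S :=
  @Act S (A + B) (coprod_actf S A B) (coprod_act1 S A B) (coprod_actM S A B).

Definition bigcoprod_actf (S : group) (I : Type) (F : I -> act S) (s : S)
  (x : {i : I & F i}) : {i : I & F i} :=
  existT _ (projT1 x) (actf (F (projT1 x)) s (projT2 x)).

Lemma bigcoprod_act1 (S : group) I (F : I -> act S) x :
  bigcoprod_actf S I F (gone S) x = x.
Proof. by case: x => i y; rewrite /bigcoprod_actf /= act1. Qed.

Lemma bigcoprod_actM (S : group) I (F : I -> act S) s t x :
  bigcoprod_actf S I F (gmul s t) x = bigcoprod_actf S I F s (bigcoprod_actf S I F t x).
Proof. by case: x => i y; rewrite /bigcoprod_actf /= actM. Qed.

Definition bigcoprod (S : group) (I : Type) (F : I -> act S) : act S :=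
  @Act S {i : I & F i} (bigcoprod_actf S I F) (bigcoprod_act1 S I F) (bigcoprod_actM S I F).

(* Free S-act on X:  F_X = \coprod_{x in X} S_x, element s of S_x is (x, s). *)
Definition free_actf (S : group) (X : Type) (s : S) (p : X * S) : X * S :=
  (p.1, gmul s p.2).

Lemma free_act1 (S : group) X (p : X * S) : free_actf S X (gone S) p = p.
Proof. by case: p => x t; rewrite /free_actf /= gmul1. Qed.

Lemma free_actM (S : group) X s t (p : X * S) :
  free_actf S X (gmul s t) p = free_actf S X s (free_actf S X t p).
Proof. by case: p => x u; rewrite /free_actf /= gmulA. Qed.

Definition free_act (S : group) (X : Type) : act S :=
  @Act S (X * S) (free_actf S X) (free_act1 S X) (free_actM S X).

Definition is_hom (S : group) (A B : act S) (f : A -> B) : Prop :=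
  forall (s : S) (a : A), f (actf A s a) = actf B s (f a).

(* T''_G : intersection of the kernels of all homomorphisms F_X -> G whose
   kernel contains T (the full relation if there is none). *)
Definition closure (S : group) (G : act S) (X : Type)
  (T : free_act S X -> free_act S X -> Prop) (u v : free_act S X) : Prop :=
  forall f : free_act S X -> G, is_hom S (free_act S X) G f ->
    (forall p q, T p q -> f p = f q) -> f u = f v.

Definition geom_equiv (S : group) (G1 G2 : act S) : Prop :=
  forall (X : finType), 0 < #|X| ->
  forall (T : free_act S X -> free_act S X -> Prop) (u v : free_act S X),
    closure S G1 X T u v <-> closure S G2 X T u v.

Arguments is_zero_act {S} z.
Arguments no_zero_subacts {S} A.
Arguments coprod {S} A B.
Arguments bigcoprod {S I} F.
Arguments is_hom {S} A B f.
Arguments closure {S} G {X} T u v.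
Arguments geom_equiv {S} G1 G2.

From Stdlib Require Import Classical ClassicalEpsilon.
From Pilot Require Import Defs.
From mathcomp Require Import all_boot.

(* If any two distinct elements of [G] are separated by a homomorphism into
   [H], then every relation holding in [H] holds in [G].
   An act [A ⊔ B] with [B] trivially acted on is separated by [A ⊔ C] as soon
   as [C] is trivially acted on and has two points: keep [A] and send [B] to
   [C] by an indicator function.  This gives (ii).  For (i), the relations
   [x s = x] force the images of all variables to be fixed points; [A ⊔ z1]
   has a single fixed point since [A] has no zero subact, while
   [A ⊔ (z1 ⊔ z2)] has two, which tell the variables apart. *)

Section GeometricEquivalence.

Context {S : group}.
Implicit Types G H : act S.

Definition fixed_point {G} (a : G) : Prop := forall s : S, actf G s a = a.

Definition trivial_act G : Prop := forall a : G, fixed_point a.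

Definition separated_by G H : Prop :=
  forall x y : G, x <> y -> exists2 h : G -> H, is_hom G H h & h x <> h y.

Lemma zero_act_eq {z : act S} : is_zero_act z -> forall x y : z, x = y.
Proof. by move=> [c zc] x y; rewrite (zc x) (zc y). Qed.

Lemma zero_act_trivial {z : act S} : is_zero_act z -> trivial_act z.
Proof. by move=> Zz a s; apply: zero_act_eq. Qed.

Lemma coprod_trivial {G H} : trivial_act G -> trivial_act H -> trivial_act (coprod G H).
Proof. by move=> tG tH [a|b] s /=; rewrite ?tG ?tH. Qed.

Lemma fixed_point_inr {G H} (b : H) :
  fixed_point b -> @fixed_point (coprod G H) (inr b).
Proof. by move=> fb s /=; rewrite fb. Qed.

Lemma bigcoprod_trivial {I : Type} {F : I -> act S} :
  (forall i, trivial_act (F i)) -> trivial_act (bigcoprod F).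
Proof. by move=> tF [i a] s; rewrite /= /bigcoprod_actf /= tF. Qed.

Lemma trivial_is_hom {G H} (f : G -> H) :
  trivial_act G -> trivial_act H -> is_hom G H f.
Proof. by move=> tG tH s a; rewrite tG tH. Qed.

Lemma closure_separated G H : separated_by G H ->
  forall (X : Type) T (u v : free_act S X), Defs.closure H T u v -> Defs.closure G T u v.
Proof.
move=> sepGH X T u v cH f fhom fT; apply: NNPP => /sepGH [h hhom].
apply; apply: (cH (fun p => h (f p))) => [s a | p q /fT -> //].
by rewrite fhom hhom.
Qed.

Lemma geom_equiv_separated G H :
  separated_by G H -> separated_by H G -> geom_equiv G H.
Proof.
by move=> sepGH sepHG X _ T u v; split; apply: closure_separated.
Qed.

Lemma trivial_act_separated {G H} (c1 c2 : H) :
  trivial_act G -> trivial_act H -> c1 <> c2 -> separated_by G H.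
Proof.
move=> tG tH c12 x y xy.
pose f b := if excluded_middle_informative (b = x) then c1 else c2.
exists f; first exact: trivial_is_hom.
rewrite /f; destruct (excluded_middle_informative (x = x)) as [xx|]; last by [].
destruct (excluded_middle_informative (y = x)) as [yx|yx]; last by [].
by case: xy; rewrite yx.
Qed.

Section CoprodMap.

Variables A B C : act S.

Definition coprod_mapr (f : B -> C) (x : coprod A B) : coprod A C :=
  match x with inl a => inl a | inr b => inr (f b) end.

Lemma coprod_mapr_is_hom (f : B -> C) :
  is_hom B C f -> is_hom (coprod A B) (coprod A C) (coprod_mapr f).
Proof. by move=> fhom s [a|b] //=; rewrite fhom. Qed.

Lemma coprod_separated :
  (exists f : B -> C, is_hom B C f) -> separated_by B C ->
  separated_by (coprod A B) (coprod A C).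
Proof.
move=> [f fhom] sepBC x y.
case: x y => [a|b] [a'|b'] xy.
- exists (coprod_mapr f); first exact: coprod_mapr_is_hom.
  by move=> [aa']; apply: xy; rewrite aa'.
- by exists (coprod_mapr f); first exact: coprod_mapr_is_hom.
- by exists (coprod_mapr f); first exact: coprod_mapr_is_hom.
have [g ghom gbb'] : exists2 g : B -> C, is_hom B C g & g b <> g b'.
  by apply: sepBC => bb'; apply: xy; rewrite bb'.
by exists (coprod_mapr g); [exact: coprod_mapr_is_hom | move=> [/gbb']].
Qed.

End CoprodMap.

(* The system of equations [x s = x], for all variables [x] and [s] in [S]. *)
Definition fixed_rel {X : Type} (p q : free_act S X) : Prop := q = (p.1, gone S).

Definition free_hom {G} {X : Type} (g : X -> G) (p : free_act S X) : G :=
  actf G p.2 (g p.1).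

Lemma free_hom_is_hom {G} {X : Type} (g : X -> G) :
  is_hom (free_act S X) G (free_hom g).
Proof. by move=> s [x t]; rewrite /free_hom /= actM. Qed.

Lemma hom_free_actE {G} {X : Type} (f : free_act S X -> G) (x : X) (s : S) :
  is_hom (free_act S X) G f -> f (x, s) = actf G s (f (x, gone S)).
Proof.
move=> fhom; rewrite -fhom; congr f.
by rewrite /= /free_actf /= gmulr1.
Qed.

Lemma hom_fixed_rel {G} {X : Type} (f : free_act S X -> G) :
  is_hom (free_act S X) G f ->
  (forall p q, fixed_rel p q -> f p = f q) <-> forall x, fixed_point (f (x, gone S)).
Proof.
move=> fhom; split=> [ffix x s | ffix [x s] q ->].
  by rewrite -hom_free_actE // (ffix (x, s) (x, gone S)).
by rewrite hom_free_actE // ffix.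
Qed.

Lemma closure_fixed_rel_unique G (X : Type) (x y : X) :
  (forall a b : G, fixed_point a -> fixed_point b -> a = b) ->
  Defs.closure G (@fixed_rel X) (x, gone S) (y, gone S).
Proof.
move=> fix_uniq f fhom /(hom_fixed_rel _ fhom) ffix.
exact: fix_uniq.
Qed.

Lemma not_closure_fixed_rel G (X : eqType) (x y : X) (a b : G) :
  x != y -> fixed_point a -> fixed_point b -> a <> b ->
  ~ Defs.closure G (@fixed_rel X) (x, gone S) (y, gone S).
Proof.
move=> xy fa fb ab cG.
pose g w := if w == x then a else b.
have gfix w : fixed_point (free_hom g (w, gone S)).
  by rewrite /free_hom /= act1 /g; case: ifP.
apply: ab; have := cG _ (free_hom_is_hom g) ((hom_fixed_rel _ (free_hom_is_hom g)).2 gfix).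
by rewrite /free_hom /= !act1 /g eqxx eq_sym (negbTE xy).
Qed.

Lemma coprod_zero_fixed_unique (A : act S) (z : act S) :
  no_zero_subacts A -> is_zero_act z ->
  forall a b : coprod A z, fixed_point a -> fixed_point b -> a = b.
Proof.
move=> nzA Zz.
have fixed_inr (a : coprod A z) : fixed_point a -> exists c, a = inr c.
  case: a => [a|c] fa; last by exists c.
  by case: nzA; exists a => s; case: (fa s).
move=> a b /fixed_inr [c ->] /fixed_inr [d ->].
by rewrite (zero_act_eq Zz c d).
Qed.

End GeometricEquivalence.

Theorem proposition3p14 (S : group) (A : act S) :
  inhabited A -> no_zero_subacts A ->
  (forall z1 z2 : act S, is_zero_act z1 -> is_zero_act z2 ->
     ~ geom_equiv (coprod A z1) (coprod A (coprod z1 z2))) /\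
  (forall z1 z2 : act S, is_zero_act z1 -> is_zero_act z2 ->
   forall (I : Type) (z : I -> act S), (forall i, is_zero_act (z i)) ->
     (exists i j : I, i <> j) ->
     geom_equiv (coprod A (coprod z1 z2)) (coprod A (bigcoprod z))).
Proof.
move=> _ nzA; split=> z1 z2 Z1 Z2.
  have [c1 _] := Z1; have [c2 _] := Z2.
  have t12 := coprod_trivial (zero_act_trivial Z1) (zero_act_trivial Z2).
  move=> /(_ bool (ltac:(by rewrite card_bool)) (@fixed_rel S bool) (true, gone S) (false, gone S)) E.
  apply: (@not_closure_fixed_rel S (coprod A (coprod z1 z2)) bool true false (inr (inl c1)) (inr (inr c2))) => //.
  - exact/fixed_point_inr/t12.
  - exact/fixed_point_inr/t12.
  - exact/E/closure_fixed_rel_unique/coprod_zero_fixed_unique.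
move=> I z Zz [i [j ij]].
have [di _] := Zz i; have [dj _] := Zz j; have [c1 _] := Z1; have [c2 _] := Z2.
have t12 := coprod_trivial (zero_act_trivial Z1) (zero_act_trivial Z2).
have tz := bigcoprod_trivial (fun k => zero_act_trivial (Zz k)).
apply: geom_equiv_separated; apply: coprod_separated.
- by exists (fun=> existT _ i di); apply: trivial_is_hom.
- by apply: (@trivial_act_separated _ _ (bigcoprod z) (existT _ i di) (existT _ j dj)) => // /(congr1 (@projT1 _ _)).
- by exists (fun=> inl c1); apply: trivial_is_hom.
- exact: (@trivial_act_separated _ _ (coprod z1 z2) (inl c1) (inr c2)).
Qed.
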